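(* Let $\mathbb X$ be a basic space and $\mathcal D=(D,<,\rho)$ a computable partially ordered set. There exists a function $E:\mathbb N\times\mathbb X\to D$ in $\mathrm{Max}_{\mathrm{PR}}[\mathbb N\times\mathbb X\to\mathcal D]$ such that $\{E_n:n\in\mathbb N\}=\mathrm{Max}_{\mathrm{PR}}[\mathbb X\to\mathcal D]$, where $E_n:\mathbb X\to D$ is the partial function $x\mapsto E(n,x)$.
   Context: A basic space is a finite non-empty product of sets each of which is $\mathbb N$, $\mathbb Z$, or $A^*$ for some finite alphabet $A$. A computable partially ordered set is a triple $\mathcal D=(D,<,\rho)$ where $\rho:\mathbb N\to D$ is a bijection and $<$ is a strict partial order on $D$ with $\{(m,n):\rho(m)<\rho(n)\}$ computable; a partial function into $D$ is partial computable if its composition with $\rho^{-1}$ is. For a basic space $\mathbb Y$ and a partial $f:\mathbb Y\times\mathbb N\to D$ monotone increasing in its second argument on its domain, $\max^{\mathcal D}f$ is the partial function on $\mathbb Y$ defined exactly at those $y$ for which $\{f(y,t):t\in\mathbb N,\ f(y,t)\text{ defined}\}$ is finite and non-empty, with value its maximum element. $\mathrm{Max}_{\mathrm{PR}}[\mathbb Y\to\mathcal D]$ is the class of all $\max^{\mathcal D}f$ with $f$ partial computable and monotone increasing in its second argument. *)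

From mathcomp Require Import all_boot.
From mathcomp Require Import ssralg ssrint.
From Stdlib Require List.
Set Implicit Arguments. Unset Strict Implicit. Unset Printing Implicit Defensive.

Inductive recf : Type :=
| RZero : recf
| RSucc : recf
| RProj : nat -> recf
| RComp : recf -> list recf -> recf
| RPrec : recf -> recf -> recf
| RMu   : recf -> recf.

Inductive ev : recf -> seq nat -> nat -> Prop :=
| evZ v : ev RZero v 0
| evS x v : ev RSucc (x :: v) x.+1
| evP i v : i < size v -> ev (RProj i) v (nth 0 v i)
| evC f gs v ws y : evs gs v ws -> ev f ws y -> ev (RComp f gs) v y
| evR0 f g v y : ev f v y -> ev (RPrec f g) (0 :: v) y
| evRS f g n v r y :
    ev (RPrec f g) (n :: v) r -> ev g (n :: r :: v) y -> ev (RPrec f g) (n.+1 :: v) y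
| evM f v n :
    ev f (n :: v) 0 -> (forall m, m < n -> exists k, ev f (m :: v) k.+1) ->
    ev (RMu f) v n
with evs : list recf -> seq nat -> seq nat -> Prop :=
| evs_nil v : evs nil v [::]
| evs_cons g gs v w ws : ev g v w -> evs gs v ws -> evs (g :: gs) v (w :: ws).

(* Basic spaces: finite non-empty products of N, Z, A^* (A = 'I_k).    *)
Inductive comp : Type := CN | CZ | CW (k : nat).

Definition comp_type (c : comp) : Type :=
  match c with CN => nat | CZ => int | CW k => seq 'I_k end.

Record bspace : Type := BSpace { bhd : comp; btl : list comp }.

Fixpoint elts (c : comp) (cs : list comp) : Type :=
  match cs with
  | nil => comp_type c
  | c' :: cs' => (comp_type c * elts c' cs')%type
  end.

Definition elt (Y : bspace) : Type := elts (bhd Y) (btl Y).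

Definition NX (Y : bspace) : bspace := BSpace CN (bhd Y :: btl Y).

Definition cpair (a b : nat) : nat := ((a + b) * (a + b).+1) %/ 2 + b.

Definition code_int (z : int) : nat :=
  match z with Posz n => n.*2 | Negz n => n.*2.+1 end.

Fixpoint code_word k (w : seq 'I_k) : nat :=
  match w with [::] => 0 | a :: w' => (cpair (nat_of_ord a) (code_word w')).+1 end.

Definition code_comp (c : comp) : comp_type c -> nat :=
  match c return comp_type c -> nat with
  | CN => fun n => n
  | CZ => code_int
  | CW k => @code_word k
  end.

Fixpoint code_elts (c : comp) (cs : list comp) : elts c cs -> nat :=
  match cs return elts c cs -> nat with
  | nil => code_comp (c := c)
  | c' :: cs' => fun p => cpair (code_comp p.1) (code_elts p.2)
  end.

Definition code (Y : bspace) (y : elt Y) : nat := code_elts y.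

Definition comp_poset (D : Type) (lt : D -> D -> Prop) (rho : nat -> D) : Prop :=
  [/\ (forall d, ~ lt d d),
      (forall a b c, lt a b -> lt b c -> lt a c),
      (forall m n, rho m = rho n -> m = n),
      (forall d, exists n, rho n = d) &
      exists e : recf, forall m n,
        (lt (rho m) (rho n) -> ev e [:: m; n] 1) /\
        (~ lt (rho m) (rho n) -> ev e [:: m; n] 0)].

Definition pcomp (D : Type) (rho : nat -> D) (Y : bspace) (f : elt Y -> option D) : Prop :=
  exists e : recf, forall y n, ev e [:: code y] n <-> f y = Some (rho n).

Definition pcomp2 (D : Type) (rho : nat -> D) (Y : bspace)
    (f : elt Y -> nat -> option D) : Prop :=
  exists e : recf, forall y t n, ev e [:: code y; t] n <-> f y t = Some (rho n).

Definition monotone2 (D : Type) (lt : D -> D -> Prop) (Y : bspace)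
    (f : elt Y -> nat -> option D) : Prop :=
  forall y t t' d d', t <= t' -> f y t = Some d -> f y t' = Some d' -> d = d' \/ lt d d'.

Definition is_maxval (D : Type) (lt : D -> D -> Prop) (Y : bspace)
    (f : elt Y -> nat -> option D) (y : elt Y) (d : D) : Prop :=
  [/\ (exists l : list D, forall d', (exists t, f y t = Some d') <-> List.In d' l),
      (exists t, f y t = Some d) &
      (forall t d', f y t = Some d' -> d' = d \/ lt d' d)].

Definition is_max_of (D : Type) (lt : D -> D -> Prop) (Y : bspace)
    (f : elt Y -> nat -> option D) (g : elt Y -> option D) : Prop :=
  forall y d, g y = Some d <-> is_maxval lt f y d.

Definition MaxPR (D : Type) (lt : D -> D -> Prop) (rho : nat -> D) (Y : bspace)
    (g : elt Y -> option D) : Prop :=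
  exists f : elt Y -> nat -> option D,
    [/\ pcomp2 rho f, monotone2 lt f & is_max_of lt f g].

From mathcomp Require Import all_boot zify.
From Stdlib Require Import Classical ClassicalEpsilon.
Set Implicit Arguments. Unset Strict Implicit. Unset Printing Implicit Defensive.

(* Every partial recursive function is the result of running its code on a
   universal machine whose single step is primitive recursive, so whether the
   program coded by [n] halts on [(x, s)] within [k] steps, and with which
   output, is computable in [(n, x, s, k)].  Dovetailing over the pairs
   [(s, k)], keep the running maximum of the outputs found so far (a new
   output replaces it only when strictly larger, which is decidable in a
   computable poset).  This sequence is monotone by construction, so its
   maximum [E (n, x)] is in Max_PR.  When [n] codes a monotone [f], the
   running maximum only takes values of [f(x, _)], which are pairwise
   comparable, and eventually dominates each of them, so it has the same
   maximum as [f(x, _)]. *)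

(* The induction principle Rocq generates for [ev] has no hypothesis for
   the nested premise of [evM]; this one also provides it. *)
Definition ev_evs_ind (P : recf -> seq nat -> nat -> Prop)
  (Ps : seq recf -> seq nat -> seq nat -> Prop)
  (hZ : forall v, P RZero v 0)
  (hS : forall x v, P RSucc (x :: v) x.+1)
  (hP : forall i v, i < size v -> P (RProj i) v (nth 0 v i))
  (hC : forall f gs v ws y, evs gs v ws -> Ps gs v ws -> ev f ws y -> P f ws y ->
          P (RComp f gs) v y)
  (hR0 : forall f g v y, ev f v y -> P f v y -> P (RPrec f g) (0 :: v) y)
  (hRS : forall f g n v r y, ev (RPrec f g) (n :: v) r -> P (RPrec f g) (n :: v) r ->
          ev g [:: n, r & v] y -> P g [:: n, r & v] y -> P (RPrec f g) (n.+1 :: v) y)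
  (hM : forall f v n, ev f (n :: v) 0 -> P f (n :: v) 0 ->
          (forall m, m < n -> exists k, ev f (m :: v) k.+1 /\ P f (m :: v) k.+1) ->
          P (RMu f) v n)
  (hN : forall v, Ps [::] v [::])
  (hK : forall g gs v w ws, ev g v w -> P g v w -> evs gs v ws -> Ps gs v ws ->
          Ps (g :: gs) v (w :: ws)) :
  forall e v y, ev e v y -> P e v y :=
  fix F e v y (H : ev e v y) {struct H} : P e v y :=
    match H in ev e v y return P e v y with
    | evZ v => hZ v
    | evS x v => hS x v
    | evP i v Hi => @hP i v Hi
    | evC f gs v ws y Hs Hf => @hC f gs v ws y Hs (G _ _ _ Hs) Hf (F _ _ _ Hf)
    | evR0 f g v y Hf => @hR0 f g v y Hf (F _ _ _ Hf)
    | evRS f g n v r y H1 H2 => @hRS f g n v r y H1 (F _ _ _ H1) H2 (F _ _ _ H2)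
    | evM f v n H0 Hl => @hM f v n H0 (F _ _ _ H0)
        (fun m Hm => match Hl m Hm with
                     | ex_intro k Hk => ex_intro _ k (conj Hk (F _ _ _ Hk)) end)
    end
  with G gs v ws (H : evs gs v ws) {struct H} : Ps gs v ws :=
    match H in evs gs v ws return Ps gs v ws with
    | evs_nil v => hN v
    | evs_cons g gs v w ws Hg Hs => @hK g gs v w ws Hg (F _ _ _ Hg) Hs (G _ _ _ Hs)
    end
  for F.

Lemma ev_functional e v y y' : ev e v y -> ev e v y' -> y = y'.
Proof.
move=> H; move: e v y H y'.
apply: (@ev_evs_ind (fun e v y => forall y', ev e v y' -> y = y')
   (fun gs v ws => forall ws', evs gs v ws' -> ws = ws')).
- by move=> v y' H; inversion H.
- by move=> x v y' H; inversion H.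
- by move=> i v _ y' H; inversion H.
- move=> f gs v ws y _ IHs _ IHf y' H; inversion H; subst.
  by rewrite (IHs _ ltac:(eassumption)) in IHf; apply: IHf.
- by move=> f g v y _ IH y' H; inversion H; subst; apply: IH.
- move=> f g n v r y _ IHr _ IHg y' H; inversion H; subst.
  by rewrite (IHr _ ltac:(eassumption)) in IHg; apply: IHg.
- move=> f v n _ IH0 IHlt y' H; inversion H as [| | | | | | ? ? ? ev_0 ev_lt]; subst.
  case: (ltngtP n y') => // [lt_ny|lt_yn].
  + by have [k /IH0] := ev_lt _ lt_ny.
  + by have [k [_ /(_ _ ev_0)]] := IHlt _ lt_yn.
- by move=> v ws' H; inversion H.
- move=> g gs v w ws _ IHg _ IHs ws' H; inversion H; subst.
  by rewrite (IHg _ ltac:(eassumption)) (IHs _ ltac:(eassumption)).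
Qed.

(** * Total computable functions *)

Definition computable k (h : seq nat -> nat) :=
  exists e, forall v, size v = k -> ev e v (h v).

Definition computable1 (F : nat -> nat) := computable 1 (fun v => F (nth 0 v 0)).
Definition computable2 (F : nat -> nat -> nat) :=
  computable 2 (fun v => F (nth 0 v 0) (nth 0 v 1)).

Fixpoint prim_rec (a : nat) (b : nat -> nat -> nat) (n : nat) : nat :=
  if n is n'.+1 then b n' (prim_rec a b n') else a.

Lemma computable_ext k h h' :
  (forall v, size v = k -> h v = h' v) -> computable k h -> computable k h'.
Proof. by move=> eq_h [e He]; exists e => v Hv; rewrite -eq_h //; apply: He. Qed.

Lemma computable_proj k i : i < k -> computable k (fun v => nth 0 v i).
Proof. by move=> lt_ik; exists (RProj i) => v Hv; constructor; rewrite Hv. Qed.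

Fixpoint const_recf c := if c is c'.+1 then RComp RSucc [:: const_recf c'] else RZero.

Lemma computable_const k c : computable k (fun _ => c).
Proof.
exists (const_recf c) => v _; elim: c => [|c IH] /=; first exact: evZ.
by apply: (@evC _ _ _ [:: c]); repeat constructor.
Qed.

Lemma computable_succ k h : computable k h -> computable k (fun v => (h v).+1).
Proof.
move=> [e He]; exists (RComp RSucc [:: e]) => v Hv.
by apply: (@evC _ _ _ [:: h v]); repeat constructor; apply: He.
Qed.

Lemma computable_comp1 k F a :
  computable1 F -> computable k a -> computable k (fun v => F (a v)).
Proof.
move=> [eF HF] [ea Ha]; exists (RComp eF [:: ea]) => v Hv.
apply: (@evC _ _ _ [:: a v]); last exact: (HF [:: a v]).
by repeat constructor; apply: Ha.
Qed.

Lemma computable_comp2 k F a b : computable2 F -> computable k a -> computable k b ->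
  computable k (fun v => F (a v) (b v)).
Proof.
move=> [eF HF] [ea Ha] [eb Hb]; exists (RComp eF [:: ea; eb]) => v Hv.
apply: (@evC _ _ _ [:: a v; b v]); last exact: (HF [:: a v; b v]).
by repeat constructor; [apply: Ha | apply: Hb].
Qed.

Lemma evs_proj_iota j k w : j + k <= size w ->
  evs (map RProj (iota j k)) w (map (nth 0 w) (iota j k)).
Proof.
elim: k j => [|k IH] j le_jk_w /=; first exact: evs_nil.
by constructor; [constructor; lia | apply: IH; lia].
Qed.

Lemma computable_drop k j h : computable k h -> computable (j + k) (fun w => h (drop j w)).
Proof.
move=> [e He]; exists (RComp e (map RProj (iota j k))) => w Hw.
apply: evC; first by apply: evs_proj_iota; lia.
have -> : k = size w - j by lia.
rewrite map_nth_iota // take_oversize ?size_drop //.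
by apply: He; rewrite size_drop; lia.
Qed.

Lemma computable_prim_rec k hn ha hb :
  computable k hn -> computable k ha -> computable k.+2 hb ->
  computable k (fun v => prim_rec (ha v) (fun i r => hb [:: i, r & v]) (hn v)).
Proof.
move=> [en Hn] [ea Ha] [eb Hb].
exists (RComp (RPrec ea eb) (en :: map RProj (iota 0 k))) => v Hv.
apply: (@evC _ _ _ (hn v :: v)).
  constructor; first exact: Hn.
  have := @evs_proj_iota 0 k v; rewrite map_nth_iota ?drop0 -Hv ?take_size ?subn0 //.
  by apply.
elim: (hn v) => [|N IH] /=; first by constructor; apply: Ha.
by apply: evRS IH _; apply: Hb; rewrite /= Hv.
Qed.

Lemma computable_addn : computable2 addn.
Proof.
apply: (computable_ext (h := fun v => prim_rec (nth 0 v 0)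
          (fun i r => (nth 0 [:: i, r & v] 1).+1) (nth 0 v 1))).
  by move=> v _; elim: (nth 0 v 1) => [|n /= ->]; rewrite ?addn0 ?addnS.
apply: (computable_prim_rec (hb := fun w => (nth 0 w 1).+1)); try exact: computable_proj.
exact/computable_succ/computable_proj.
Qed.

Lemma computable_predn : computable1 predn.
Proof.
apply: (computable_ext (h := fun v => prim_rec 0
          (fun i r => nth 0 [:: i, r & v] 0) (nth 0 v 0))).
  by move=> v _; case: (nth 0 v 0).
by apply: (computable_prim_rec (hb := fun w => nth 0 w 0));
  [exact: computable_proj | exact: computable_const | exact: computable_proj].
Qed.

Lemma computable_subn : computable2 subn.
Proof.
apply: (computable_ext (h := fun v => prim_rec (nth 0 v 0)
          (fun i r => predn (nth 0 [:: i, r & v] 1)) (nth 0 v 1))).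
  by move=> v _; elim: (nth 0 v 1) => [|n /= ->]; rewrite ?subn0 ?subnS.
apply: (computable_prim_rec (hb := fun w => predn (nth 0 w 1))); try exact: computable_proj.
by apply: computable_comp1; [exact: computable_predn | exact: computable_proj].
Qed.

Lemma computable_ifz k c a b : computable k c -> computable k a -> computable k b ->
  computable k (fun v => if c v == 0 then a v else b v).
Proof.
move=> Hc Ha Hb.
apply: (computable_ext (h := fun v => prim_rec (a v)
          (fun i r => b (drop 2 [:: i, r & v])) (c v))).
  by move=> v _ /=; rewrite drop0; case: (c v).
exact: (computable_prim_rec Hc Ha (computable_drop 2 Hb)).
Qed.

Lemma computable_ifeq k a b x y :
  computable k a -> computable k b -> computable k x -> computable k y ->
  computable k (fun v => if a v == b v then x v else y v).
Proof.
move=> Ha Hb Hx Hy.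
apply: (computable_ext (h := fun v =>
          if (a v - b v) + (b v - a v) == 0 then x v else y v)).
  by move=> v _; do 2 case: eqP; lia.
apply: computable_ifz => //.
by apply: computable_comp2 computable_addn _ _; apply: computable_comp2 computable_subn _ _.
Qed.

Create HintDb computable.
#[export] Hint Resolve computable_addn computable_subn computable_predn : computable.

Ltac solve_computable :=
  first
  [ apply: computable_proj; done
  | apply: computable_const
  | apply: computable_ifeq; solve_computable
  | apply: computable_succ; solve_computable
  | apply: computable_comp2; [by eauto with computable | solve_computable | solve_computable]
  | apply: computable_comp1; [by eauto with computable | solve_computable] ].

(** * Cantor pairing and its inverse *)

Definition tri n := prim_rec 0 (fun i r => r + i.+1) n.

Lemma tri_double n : (tri n).*2 = n * n.+1.
Proof. by elim: n => [|n IH] //=; rewrite doubleD IH; lia. Qed.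

Lemma cpair_tri a b : cpair a b = tri (a + b) + b.
Proof. by rewrite /cpair -tri_double divn2 doubleK. Qed.

Lemma leq_tri m n : m <= n -> tri m <= tri n.
Proof.
move/subnKC <-; elim: (n - m) => [|k IH]; first by rewrite addn0.
by rewrite addnS; apply: leq_trans IH (leq_addr _ _).
Qed.

Lemma leq_id_tri n : n <= tri n.
Proof. by case: n => // n; apply: leq_addl. Qed.

Lemma computable_tri : computable1 tri.
Proof.
apply: (computable_ext (h := fun v => prim_rec 0
          (fun i r => nth 0 [:: i, r & v] 1 + (nth 0 [:: i, r & v] 0).+1) (nth 0 v 0))) => //.
by apply: (computable_prim_rec (hb := fun w => nth 0 w 1 + (nth 0 w 0).+1)); solve_computable.
Qed.
#[export] Hint Resolve computable_tri : computable.

Lemma computable_cpair : computable2 cpair.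
Proof.
apply: (computable_ext (h := fun v => tri (nth 0 v 0 + nth 0 v 1) + nth 0 v 1)).
  by move=> v _; rewrite cpair_tri.
solve_computable.
Qed.
#[export] Hint Resolve computable_cpair : computable.

(* [unpair_sum z] counts the [i < z] with [tri i.+1 <= z]; on [cpair a b]
   this is the diagonal index [a + b]. *)
Definition unpair_sum z :=
  prim_rec 0 (fun i r => r + (if tri i.+1 - z == 0 then 1 else 0)) z.

Lemma unpair_sum_cpair a b : unpair_sum (cpair a b) = a + b.
Proof.
rewrite /unpair_sum cpair_tri; set s := a + b; set z := tri s + b.
have le_s_z : s <= z by have := leq_id_tri s; lia.
suff eq_min i : prim_rec 0 (fun i r => r + (if tri i.+1 - z == 0 then 1 else 0)) i
                = minn i s by rewrite eq_min; lia.
elim: i => [|i /= ->]; first by rewrite min0n.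
case: (ltnP i s) => Hi.
- have : tri i.+1 <= tri s by apply: leq_tri.
  move=> ?; have -> : tri i.+1 - z == 0 by apply/eqP; lia.
  lia.
- have : tri s + s.+1 <= tri i.+1 by apply: (@leq_tri s.+1).
  move=> ?; have -> : (tri i.+1 - z == 0) = false by apply/eqP; rewrite /z; lia.
  lia.
Qed.

Lemma computable_unpair_sum : computable1 unpair_sum.
Proof.
apply: (computable_ext (h := fun v => prim_rec 0 (fun i r =>
   nth 0 [:: i, r & v] 1 + (if tri (nth 0 [:: i, r & v] 0).+1 - nth 0 [:: i, r & v] 2 == 0
                            then 1 else 0)) (nth 0 v 0))) => //.
by apply: (computable_prim_rec (hb := fun w =>
  nth 0 w 1 + (if tri (nth 0 w 0).+1 - nth 0 w 2 == 0 then 1 else 0))); solve_computable.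
Qed.
#[export] Hint Resolve computable_unpair_sum : computable.

Definition unpair2 z := z - tri (unpair_sum z).
Definition unpair1 z := unpair_sum z - unpair2 z.

Lemma unpair2_cpair a b : unpair2 (cpair a b) = b.
Proof. by rewrite /unpair2 unpair_sum_cpair cpair_tri; lia. Qed.

Lemma unpair1_cpair a b : unpair1 (cpair a b) = a.
Proof. by rewrite /unpair1 unpair2_cpair unpair_sum_cpair; lia. Qed.

Lemma computable_unpair2 : computable1 unpair2.
Proof. rewrite /computable1 /unpair2; solve_computable. Qed.
#[export] Hint Resolve computable_unpair2 : computable.

Lemma computable_unpair1 : computable1 unpair1.
Proof. rewrite /computable1 /unpair1; solve_computable. Qed.
#[export] Hint Resolve computable_unpair1 : computable.

Definition code_cons h t := (cpair h t).+1.
Local Notation "h ::: t" := (code_cons h t) (at level 60, right associativity).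
Definition code_head l := unpair1 l.-1.
Definition code_behead l := unpair2 l.-1.

Lemma code_head_cons h t : code_head (h ::: t) = h.
Proof. exact: unpair1_cpair. Qed.

Lemma code_behead_cons h t : code_behead (h ::: t) = t.
Proof. exact: unpair2_cpair. Qed.

Lemma computable_code_cons : computable2 code_cons.
Proof. rewrite /computable2 /code_cons; solve_computable. Qed.
Lemma computable_code_head : computable1 code_head.
Proof. rewrite /computable1 /code_head; solve_computable. Qed.
Lemma computable_code_behead : computable1 code_behead.
Proof. rewrite /computable1 /code_behead; solve_computable. Qed.
#[export] Hint Resolve computable_code_cons computable_code_head computable_code_behead
  : computable.

Definition code_drop n l := prim_rec l (fun _ r => code_behead r) n.

Lemma computable_code_drop : computable2 code_drop.
Proof.
apply: (computable_ext (h := fun v => prim_rec (nth 0 v 1)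
          (fun i r => code_behead (nth 0 [:: i, r & v] 1)) (nth 0 v 0))) => //.
by apply: (computable_prim_rec (hb := fun w => code_behead (nth 0 w 1))); solve_computable.
Qed.
#[export] Hint Resolve computable_code_drop : computable.

Fixpoint code_seq (s : seq nat) : nat := if s is x :: s' then x ::: code_seq s' else 0.

Lemma code_behead_code_seq v : code_behead (code_seq v) = code_seq (behead v).
Proof. by case: v => [|x v] /=; rewrite ?code_behead_cons. Qed.

Lemma code_drop_code_seq i v : code_drop i (code_seq v) = code_seq (drop i v).
Proof.
elim: i => [|i IH]; first by rewrite drop0.
change (code_behead (code_drop i (code_seq v)) = code_seq (drop i.+1 v)).
by rewrite IH code_behead_code_seq -drop1 drop_drop add1n.
Qed.

(** * A universal machine *)

(* The argument programs of a composition are listed in reverse order, since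
   the machine conses their results onto an accumulator. *)
Fixpoint code_recf (e : recf) : nat :=
  match e with
  | RZero => cpair 0 0
  | RSucc => cpair 1 0
  | RProj i => cpair 2 i
  | RComp f gs => cpair 3 (cpair (code_recf f) (code_seq (rev (map code_recf gs))))
  | RPrec f g => cpair 4 (cpair (code_recf f) (code_recf g))
  | RMu f => cpair 5 (code_recf f)
  end.

(* A state [cpair C V] consists of a control stack [C] of instructions
   [cpair tag p] and a stack [V] of values, both coded by [code_cons]; the
   machine has halted when [C] is empty.  Tag 0 runs the program coded by [p]
   on the argument list on top of [V] and replaces that list by the result.
   Tag 1 evaluates the arguments of a composition, [p] coding the outer
   program and the argument programs still to run, above the accumulated
   results and the arguments; tag 2 pushes a computed argument onto the
   accumulator.  Tags 3 and 4 run the loops of primitive recursion (with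
   result, counter, bound and arguments on top of [V]) and of minimisation
   (with last value, counter and arguments).  Stuck configurations are fixed
   points. *)
Definition step (z : nat) : nat :=
  let C := unpair1 z in let V := unpair2 z in
  if C == 0 then z else
  let C' := code_behead C in
  let tag := unpair1 (code_head C) in let p := unpair2 (code_head C) in
  let a := code_head V in let V' := code_behead V in
  if tag == 0 then
    let op := unpair1 p in let q := unpair2 p in
    if op == 0 then cpair C' (0 ::: V')
    else if op == 1 then (if a == 0 then z else cpair C' ((code_head a).+1 ::: V'))
    else if op == 2 then
      (if code_drop q a == 0 then z else cpair C' (code_head (code_drop q a) ::: V'))
    else if op == 3 then cpair (cpair 1 q ::: C') (0 ::: V)
    else if op == 4 then
      (if a == 0 then z else
       cpair (cpair 0 (unpair1 q) ::: cpair 3 (unpair2 q) ::: C')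
             (code_behead a ::: 0 ::: code_head a ::: code_behead a ::: V'))
    else if op == 5 then
      cpair (cpair 0 q ::: cpair 4 q ::: C') ((0 ::: a) ::: 0 ::: V)
    else z
  else if tag == 1 then
    (if unpair2 p == 0 then cpair (cpair 0 (unpair1 p) ::: C') (a ::: code_behead V')
     else cpair (cpair 0 (code_head (unpair2 p)) ::: cpair 2 0
                   ::: cpair 1 (cpair (unpair1 p) (code_behead (unpair2 p))) ::: C')
                (code_head V' ::: V))
  else if tag == 2 then cpair C' ((a ::: code_head V') ::: code_behead V')
  else if tag == 3 then
    (if code_head V' == code_head (code_behead V') then
       cpair C' (a ::: code_behead (code_behead (code_behead V')))
     else cpair (cpair 0 p ::: cpair 3 p ::: C')
                ((code_head V' ::: a ::: code_head (code_behead (code_behead V')))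
                 ::: (code_head V').+1 ::: code_behead V'))
  else if tag == 4 then
    (if a == 0 then cpair C' (code_head V' ::: code_behead (code_behead V'))
     else cpair (cpair 0 p ::: cpair 4 p ::: C')
                (((code_head V').+1 ::: code_head (code_behead V'))
                 ::: (code_head V').+1 ::: code_behead V'))
  else z.

Lemma computable_step : computable1 step.
Proof. by rewrite /computable1 /step; cbv zeta; solve_computable. Qed.
#[export] Hint Resolve computable_step : computable.

Ltac simpl_step :=
  rewrite /step; cbv zeta;
  rewrite ?(unpair1_cpair, unpair2_cpair, code_head_cons, code_behead_cons) /=.

Definition eval_state e v C V :=
  cpair (cpair 0 (code_recf e) ::: C) (code_seq v ::: V).
Definition args_state f L (A v : seq nat) C V :=
  cpair (cpair 1 (cpair (code_recf f) (code_seq L)) ::: C)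
        (code_seq A ::: code_seq v ::: V).
Definition prec_state g r i N v C V :=
  cpair (cpair 3 (code_recf g) ::: C) (r ::: i ::: N ::: code_seq v ::: V).
Definition mu_state f res m v C V :=
  cpair (cpair 4 (code_recf f) ::: C) (res ::: m ::: code_seq v ::: V).

Lemma step_halted V : step (cpair 0 V) = cpair 0 V.
Proof. by rewrite /step unpair1_cpair. Qed.

Lemma step_zero C v V : step (eval_state RZero v C V) = cpair C (0 ::: V).
Proof. by simpl_step. Qed.

Lemma step_succ C x v V : step (eval_state RSucc (x :: v) C V) = cpair C (x.+1 ::: V).
Proof. by simpl_step. Qed.

Lemma step_succ_nil C V : step (eval_state RSucc [::] C V) = eval_state RSucc [::] C V.
Proof. by simpl_step. Qed.

Lemma step_proj C i v V : i < size v ->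
  step (eval_state (RProj i) v C V) = cpair C (nth 0 v i ::: V).
Proof.
by move=> lt_i_v; simpl_step; rewrite code_drop_code_seq (drop_nth 0 lt_i_v) /= code_head_cons.
Qed.

Lemma step_proj_out C i v V : size v <= i ->
  step (eval_state (RProj i) v C V) = eval_state (RProj i) v C V.
Proof. by move=> le_v_i; simpl_step; rewrite code_drop_code_seq drop_oversize. Qed.

Lemma step_comp C f gs v V :
  step (eval_state (RComp f gs) v C V) = args_state f (rev (map code_recf gs)) [::] v C V.
Proof. by simpl_step. Qed.

Lemma step_prec C f g n v V :
  step (eval_state (RPrec f g) (n :: v) C V) =
  eval_state f v (cpair 3 (code_recf g) ::: C) (0 ::: n ::: code_seq v ::: V).
Proof. by simpl_step. Qed.

Lemma step_prec_nil C f g V :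
  step (eval_state (RPrec f g) [::] C V) = eval_state (RPrec f g) [::] C V.
Proof. by simpl_step. Qed.

Lemma step_mu C f v V :
  step (eval_state (RMu f) v C V) =
  eval_state f (0 :: v) (cpair 4 (code_recf f) ::: C) (0 ::: code_seq v ::: V).
Proof. by simpl_step. Qed.

Lemma step_args_nil C f A v V :
  step (args_state f [::] A v C V) = eval_state f A C V.
Proof. by simpl_step. Qed.

Lemma step_args_cons C f g L A v V :
  step (args_state f (code_recf g :: L) A v C V) =
  eval_state g v (cpair 2 0 ::: cpair 1 (cpair (code_recf f) (code_seq L)) ::: C)
                 (code_seq A ::: code_seq v ::: V).
Proof. by simpl_step. Qed.

Lemma step_push_arg C f L w A v V :
  step (cpair (cpair 2 0 ::: cpair 1 (cpair (code_recf f) (code_seq L)) ::: C)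
              (w ::: code_seq A ::: code_seq v ::: V)) =
  args_state f L (w :: A) v C V.
Proof. by simpl_step. Qed.

Lemma step_prec_done C g r N v V :
  step (prec_state g r N N v C V) = cpair C (r ::: V).
Proof. by simpl_step; rewrite eqxx. Qed.

Lemma step_prec_next C g r i N v V : i != N ->
  step (prec_state g r i N v C V) =
  eval_state g [:: i, r & v] (cpair 3 (code_recf g) ::: C)
             (i.+1 ::: N ::: code_seq v ::: V).
Proof. by move=> /negbTE neq_iN; simpl_step; rewrite neq_iN. Qed.

Lemma step_mu_done C f m v V : step (mu_state f 0 m v C V) = cpair C (m ::: V).
Proof. by simpl_step. Qed.

Lemma step_mu_next C f k m v V :
  step (mu_state f k.+1 m v C V) =
  eval_state f (m.+1 :: v) (cpair 4 (code_recf f) ::: C) (m.+1 ::: code_seq v ::: V).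
Proof. by simpl_step. Qed.

Definition run n z := iter n step z.
Definition reach s s' := exists n, run n s = s'.

Lemma run_add m n s : run (m + n) s = run n (run m s).
Proof. by rewrite /run addnC iterD. Qed.

Lemma runSr n s : run n.+1 s = run n (step s).
Proof. by rewrite /run iterSr. Qed.

Lemma reach_refl s : reach s s.
Proof. by exists 0. Qed.

Lemma reach_trans s1 s2 s3 : reach s1 s2 -> reach s2 s3 -> reach s1 s3.
Proof. by move=> [m <-] [n <-]; exists (m + n); rewrite run_add. Qed.

Lemma reach_step s s' : reach (step s) s' -> reach s s'.
Proof. by move=> [n <-]; exists n.+1; rewrite runSr. Qed.

Lemma reach_step1 s s' : step s = s' -> reach s s'.
Proof. by move=> <-; apply/reach_step/reach_refl. Qed.

Definition reaches_result e v y := forall C V, reach (eval_state e v C V) (cpair C (y ::: V)).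

Definition reaches_prec_loop e v y :=
  if (e, v) is (RPrec f g, n :: v') then
    forall C V N, n <= N ->
      reach (eval_state f v' (cpair 3 (code_recf g) ::: C)
                         (0 ::: N ::: code_seq v' ::: V))
            (prec_state g y n N v' C V)
  else True.

Lemma reaches_mu f v n :
  reaches_result f (n :: v) 0 ->
  (forall m, m < n -> exists k, reaches_result f (m :: v) k.+1) ->
  reaches_result (RMu f) v n.
Proof.
move=> reach_n reach_lt C V; apply: reach_step; rewrite step_mu.
set s0 := eval_state _ _ _ _.
have loop m : m <= n ->
    exists2 r, (r == 0) = (m == n) & reach s0 (mu_state f r m v C V).
  have reach_m m' : m' <= n -> exists2 r, (r == 0) = (m' == n) &
      reaches_result f (m' :: v) r.
    rewrite leq_eqVlt => /predU1P [->|lt_m'n]; first by exists 0; [rewrite !eqxx | apply: reach_n].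
    have [k ?] := reach_lt _ lt_m'n; exists k.+1 => //.
    by rewrite (ltn_eqF lt_m'n).
  elim: m => [|m IH] le_mn.
    by have [r eq_r reach_r] := reach_m 0 le_mn; exists r; last exact: reach_r.
  have [[|r] eq_r reach_r] := IH (ltnW le_mn); first by move: eq_r; rewrite eqxx ltn_eqF.
  have [r' eq_r' reach_r'] := reach_m _ le_mn; exists r' => //.
  by apply: (reach_trans reach_r); apply: reach_step; rewrite step_mu_next; apply: reach_r'.
have [[|r] eq_r reach_r] := loop n (leqnn n); last by move: eq_r; rewrite eqxx.
by apply: (reach_trans reach_r); apply: reach_step1; rewrite step_mu_done.
Qed.

Lemma ev_reaches e v y : ev e v y -> reaches_result e v y.
Proof.
move=> ev_y; suff [] : reaches_result e v y /\ reaches_prec_loop e v y by [].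
move: e v y ev_y; apply: (@ev_evs_ind _ (fun gs v ws => forall f L A C V,
   reach (args_state f (rev (map code_recf gs) ++ L) A v C V) (args_state f L (ws ++ A) v C V))).
- by move=> v; split=> // C V; apply/reach_step1/step_zero.
- by move=> x v; split=> // C V; apply/reach_step1/step_succ.
- by move=> i v lt_i_v; split=> // C V; apply/reach_step1/step_proj.
- move=> f gs v ws y _ reach_ws _ [reach_y _]; split=> // C V.
  apply: reach_step; rewrite step_comp.
  have := reach_ws f [::] [::] C V; rewrite !cats0 => /reach_trans; apply.
  by apply: reach_step; rewrite step_args_nil; apply: reach_y.
- move=> f g v y _ [reach_y _].
  have loop : reaches_prec_loop (RPrec f g) (0 :: v) y by move=> C V N _; apply: reach_y.
  split=> // C V; apply: reach_step; rewrite step_prec.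
  by apply: (reach_trans (loop _ _ _ isT)); apply/reach_step1/step_prec_done.
- move=> f g n v r y _ [_ loop_r] _ [reach_y _].
  have loop : reaches_prec_loop (RPrec f g) (n.+1 :: v) y.
    move=> C V N lt_nN; apply: (reach_trans (loop_r C V N (ltnW lt_nN))).
    by apply: reach_step; rewrite step_prec_next ?ltn_eqF //; apply: reach_y.
  split=> // C V; apply: reach_step; rewrite step_prec.
  by apply: (reach_trans (loop _ _ _ (leqnn _))); apply/reach_step1/step_prec_done.
- move=> f v n _ [reach_0 _] reach_lt; split=> //; apply: reaches_mu => // m lt_mn.
  by have [k [_ [? _]]] := reach_lt m lt_mn; exists k.
- by move=> v f L A C V; apply: reach_refl.
- move=> g gs v w ws _ [reach_w _] _ reach_ws f L A C V.
  rewrite map_cons rev_cons cat_rcons.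
  apply: (reach_trans (reach_ws f (code_recf g :: L) A C V)).
  apply: reach_step; rewrite step_args_cons; apply: (reach_trans (reach_w _ _)).
  by apply/reach_step1/step_push_arg.
Qed.

Definition halted_by n s := unpair1 (run n s) == 0.

Lemma unpair1_state a b V : unpair1 (cpair (a ::: b) V) != 0.
Proof. by rewrite unpair1_cpair. Qed.

Lemma halted_by_step n s : halted_by n s -> unpair1 s != 0 ->
  exists2 n', n = n'.+1 & halted_by n' (step s).
Proof. by case: n => [/eqP -> //|n]; rewrite /halted_by runSr; exists n. Qed.

Lemma halted_by_stuck n s : halted_by n s -> unpair1 s != 0 -> step s != s.
Proof.
move=> halt running; apply/eqP => fix_s; move: halt running; rewrite /halted_by.
have -> : run n s = s by elim: n => // n; rewrite runSr fix_s.
by move=> ->.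
Qed.

Lemma halted_by_run n k s : halted_by n s -> k <= n -> halted_by (n - k) (run k s).
Proof. by rewrite /halted_by -run_add => halt /subnKC ->. Qed.

Lemma evs_cat gs1 gs2 v ws1 ws2 :
  evs gs1 v ws1 -> evs gs2 v ws2 -> evs (gs1 ++ gs2) v (ws1 ++ ws2).
Proof. by elim=> //= g gs v' w ws ? _ IH ?; constructor => //; apply: IH. Qed.

Lemma evs_rev gs v ws : evs gs v ws -> evs (rev gs) v (rev ws).
Proof.
elim=> [v'|g gs' v' w ws' ev_w _ IH]; first exact: evs_nil.
by rewrite !rev_cons -!cats1; apply: evs_cat IH _; repeat constructor.
Qed.

Definition eval_sound n := forall e v C V, halted_by n (eval_state e v C V) ->
  exists y k, [/\ k <= n, ev e v y & run k (eval_state e v C V) = cpair C (y ::: V)].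

Definition args_sound n := forall f gs A v C V,
  halted_by n (args_state f (map code_recf gs) A v C V) ->
  exists ws y k, [/\ k <= n, evs gs v ws, ev f (catrev ws A) y &
     run k (args_state f (map code_recf gs) A v C V) = cpair C (y ::: V)].

Definition prec_sound n := forall f g i r N v C V,
  ev (RPrec f g) (i :: v) r -> halted_by n (prec_state g r i N v C V) ->
  exists y k, [/\ k <= n, ev (RPrec f g) (N :: v) y &
     run k (prec_state g r i N v C V) = cpair C (y ::: V)].

Definition mu_sound n := forall f r m v C V, ev f (m :: v) r ->
  (forall m', m' < m -> exists k, ev f (m' :: v) k.+1) -> halted_by n (mu_state f r m v C V) ->
  exists y k, [/\ k <= n, ev (RMu f) v y & run k (mu_state f r m v C V) = cpair C (y ::: V)].

Section Soundness.

Variable n : nat.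
Hypothesis IH : forall m, m < n -> [/\ eval_sound m, args_sound m, prec_sound m & mu_sound m].

Lemma eval_sound_ind : eval_sound n.
Proof.
move=> e v C V halt; have [n' def_n halt'] := halted_by_step halt (unpair1_state _ _ _).
have [eval_IH args_IH _ _] := @IH n' ltac:(by rewrite def_n).
have stuck := halted_by_stuck halt (unpair1_state _ _ _).
case: e halt halt' stuck => [||i|f gs|f g|f] halt halt' stuck.
- by exists 0, 1; rewrite def_n; split=> //; [apply: evZ | apply: step_zero].
- case: v halt halt' stuck => [|x v] _ _; first by rewrite step_succ_nil eqxx.
  by exists x.+1, 1; rewrite def_n; split=> //; [apply: evS | apply: step_succ].
- case: (ltnP i (size v)) => [lt_i_v|le_v_i]; last by rewrite step_proj_out ?eqxx in stuck.
  by exists (nth 0 v i), 1; rewrite def_n; split=> //; [apply: evP | apply: step_proj].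
- move: halt'; rewrite step_comp -map_rev => /args_IH [ws [y [k [le_kn' ev_ws ev_y run_k]]]].
  exists y, k.+1; split; first by rewrite def_n.
    apply: (@evC _ _ _ (rev ws)); first by rewrite -[gs]revK; apply: evs_rev.
    by rewrite catrevE cats0 in ev_y.
  by rewrite runSr step_comp -map_rev.
- case: v halt halt' stuck => [|i v] _; first by rewrite step_prec_nil eqxx.
  rewrite step_prec => halt' _; have [y0 [k1 [le_k1 ev_y0 run_k1]]] := eval_IH _ _ _ _ halt'.
  have := halted_by_run halt' le_k1; rewrite run_k1 => halt''.
  have [_ _ prec_IH _] := @IH (n' - k1) ltac:(rewrite def_n; lia).
  have [y [k2 [le_k2 ev_y run_k2]]] := prec_IH f g 0 y0 i v C V (evR0 g ev_y0) halt''.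
  exists y, (k1 + k2).+1; split=> //; first by rewrite def_n; lia.
  by rewrite runSr step_prec run_add run_k1.
- move: halt'; rewrite step_mu => halt'.
  have [r [k1 [le_k1 ev_r run_k1]]] := eval_IH _ _ _ _ halt'.
  have := halted_by_run halt' le_k1; rewrite run_k1 => halt''.
  have [_ _ _ mu_IH] := @IH (n' - k1) ltac:(rewrite def_n; lia).
  have [y [k2 [le_k2 ev_y run_k2]]] :=
    mu_IH f r 0 v C V ev_r (fun m' lt_m'0 => False_ind _ (notF lt_m'0)) halt''.
  exists y, (k1 + k2).+1; split=> //; first by rewrite def_n; lia.
  by rewrite runSr step_mu run_add run_k1.
Qed.

Lemma args_sound_ind : args_sound n.
Proof.
move=> f gs A v C V halt; have [n' def_n halt'] := halted_by_step halt (unpair1_state _ _ _).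
have [eval_IH _ _ _] := @IH n' ltac:(by rewrite def_n).
case: gs halt halt' => [|g gs] _.
  rewrite step_args_nil => /eval_IH [y [k [le_k ev_y run_k]]].
  exists [::], y, k.+1; split=> //; first by rewrite def_n.
    exact: evs_nil.
  by rewrite runSr step_args_nil.
rewrite /= step_args_cons => halt'.
have [w [k1 [le_k1 ev_w run_k1]]] := eval_IH _ _ _ _ halt'.
have := halted_by_run halt' le_k1; rewrite run_k1.
move=> /halted_by_step /(_ (unpair1_state _ _ _)) [n'' def_n'']; rewrite step_push_arg => halt''.
have [_ args_IH _ _] := @IH n'' ltac:(rewrite def_n; lia).
have [ws [y [k2 [le_k2 ev_ws ev_y run_k2]]]] := args_IH _ _ _ _ _ _ halt''.
exists (w :: ws), y, (k1 + k2.+1).+1; split=> //; first by rewrite def_n; lia.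
  by constructor.
by rewrite runSr /= step_args_cons run_add run_k1 runSr step_push_arg.
Qed.

Lemma prec_sound_ind : prec_sound n.
Proof.
move=> f g i r N v C V ev_r halt.
have [n' def_n halt'] := halted_by_step halt (unpair1_state _ _ _).
have [eval_IH _ _ _] := @IH n' ltac:(by rewrite def_n).
case: (eqVneq i N) => [<-|neq_iN].
  by exists r, 1; split=> //; [rewrite def_n | apply: step_prec_done].
move: halt'; rewrite step_prec_next // => halt'.
have [y1 [k1 [le_k1 ev_y1 run_k1]]] := eval_IH _ _ _ _ halt'.
have := halted_by_run halt' le_k1; rewrite run_k1 => halt''.
have [_ _ prec_IH _] := @IH (n' - k1) ltac:(rewrite def_n; lia).
have [y [k2 [le_k2 ev_y run_k2]]] := prec_IH _ _ _ _ _ _ _ _ (evRS ev_r ev_y1) halt''.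
exists y, (k1 + k2).+1; split=> //; first by rewrite def_n; lia.
by rewrite runSr step_prec_next // run_add run_k1.
Qed.

Lemma mu_sound_ind : mu_sound n.
Proof.
move=> f r m v C V ev_r ev_lt halt.
have [n' def_n halt'] := halted_by_step halt (unpair1_state _ _ _).
have [eval_IH _ _ _] := @IH n' ltac:(by rewrite def_n).
case: r ev_r halt halt' => [|k] ev_r _.
  by exists m, 1; split=> //; [rewrite def_n | exact: evM ev_r ev_lt | apply: step_mu_done].
rewrite step_mu_next => halt'.
have [r [k1 [le_k1 ev_r' run_k1]]] := eval_IH _ _ _ _ halt'.
have := halted_by_run halt' le_k1; rewrite run_k1 => halt''.
have [_ _ _ mu_IH] := @IH (n' - k1) ltac:(rewrite def_n; lia).
have ev_lt' m' : m' < m.+1 -> exists k, ev f (m' :: v) k.+1.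
  by rewrite ltnS leq_eqVlt => /predU1P [->|/ev_lt //]; exists k.
have [y [k2 [le_k2 ev_y run_k2]]] := mu_IH _ _ _ _ _ _ ev_r' ev_lt' halt''.
exists y, (k1 + k2).+1; split=> //; first by rewrite def_n; lia.
by rewrite runSr step_mu_next run_add run_k1.
Qed.

End Soundness.

Lemma halted_ev n e v C V : halted_by n (eval_state e v C V) ->
  exists y k, [/\ k <= n, ev e v y & run k (eval_state e v C V) = cpair C (y ::: V)].
Proof.
have [eval_n _ _ _] : [/\ eval_sound n, args_sound n, prec_sound n & mu_sound n].
  elim/ltn_ind: n => n IH.
  by split; [apply: eval_sound_ind | apply: args_sound_ind | apply: prec_sound_ind
            | apply: mu_sound_ind].
exact: eval_n.
Qed.

(* [stage_output (cpair c a) (cpair s k)] is [w.+1] when the program coded by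
   [c] halts on [[:: a; s]] within [k] steps with output [w], and [0] otherwise. *)
Definition start_state c a s := cpair (cpair 0 c ::: 0) ((a ::: s ::: 0) ::: 0).

Definition stage_output z k :=
  let s := run (unpair2 k) (start_state (unpair1 z) (unpair2 z) (unpair1 k)) in
  if unpair1 s == 0 then (code_head (unpair2 s)).+1 else 0.

Lemma computable_run : computable2 run.
Proof.
apply: (computable_ext (h := fun v => prim_rec (nth 0 v 1)
          (fun i r => step (nth 0 [:: i, r & v] 1)) (nth 0 v 0))).
  by move=> v _; rewrite /run; elim: (nth 0 v 0) => //= n ->.
apply: (computable_prim_rec (hb := fun w => step (nth 0 w 1))); try exact: computable_proj.
by apply: computable_comp1 computable_step _; apply: computable_proj.
Qed.
#[export] Hint Resolve computable_run : computable.

Lemma computable_stage_output : computable2 stage_output.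
Proof. by rewrite /computable2 /stage_output /start_state; solve_computable. Qed.

Lemma stage_output_sound e a k w :
  stage_output (cpair (code_recf e) a) k = w.+1 -> ev e [:: a; unpair1 k] w.
Proof.
rewrite /stage_output unpair1_cpair unpair2_cpair; case: ifP => // halt [<-].
have [y [k' [le_k' ev_y run_k']]] := @halted_ev _ e [:: a; unpair1 k] 0 0 halt.
have -> : run (unpair2 k) (eval_state e [:: a; unpair1 k] 0 0) = cpair 0 (y ::: 0).
  by rewrite -(subnKC le_k') run_add run_k'; elim: (_ - _) => // n; rewrite runSr step_halted.
by rewrite unpair2_cpair code_head_cons.
Qed.

Lemma stage_output_complete e a s w :
  ev e [:: a; s] w -> exists k, stage_output (cpair (code_recf e) a) k = w.+1.
Proof.
move=> /ev_reaches /(_ 0 0) [n run_n]; exists (cpair s n).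
rewrite /stage_output !unpair1_cpair !unpair2_cpair.
by rewrite [run _ _]run_n unpair1_cpair unpair2_cpair code_head_cons.
Qed.

(** * Running maxima *)

Lemma partial_of_computable2 G : computable2 G ->
  exists e, forall z t y, ev e [:: z; t] y <-> G z t = y.+1.
Proof.
move=> G_computable.
have [e He] : computable 3 (fun v => ((nth 0 v 0).+1 - G (nth 0 v 1) (nth 0 v 2)) +
                                   (G (nth 0 v 1) (nth 0 v 2) - (nth 0 v 0).+1)).
  by apply: computable_comp2 computable_addn _ _;
     apply: computable_comp2 computable_subn _ _; solve_computable.
exists (RMu e) => z t y; split.
- move=> ev_y; inversion ev_y as [| | | | | | ? ? ? ev_0]; subst.
  by have /= := ev_functional (He [:: y; z; t] erefl) ev_0; lia.
- move=> eq_G; apply: evM.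
    by have := He [:: y; z; t] erefl; rewrite /= eq_G subnn; apply.
  move=> m lt_my; have := He [:: m; z; t] erefl; rewrite /= eq_G.
  have -> : (m.+1 - y.+1) + (y.+1 - m.+1) = (y - m).-1.+1 by lia.
  by move=> ?; exists (y - m).-1.
Qed.

Definition decides_lt D (lt : D -> D -> Prop) (rho : nat -> D) (cmp : nat -> nat -> nat) :=
  forall m n, cmp m n != 0 <-> lt (rho m) (rho n).

Section RunningMax.

Variables (D : Type) (lt : D -> D -> Prop) (rho : nat -> D) (cmp : nat -> nat -> nat).
Hypothesis cmpP : decides_lt lt rho cmp.

(* Partial values are coded in [nat] with [0] for "undefined" and [w.+1]
   for [rho w]; [max_update cmp o r] keeps the current maximum [r] unless
   the new value [o] is strictly larger. *)
Definition max_update o r :=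
  if o == 0 then r else if r == 0 then o else if cmp r.-1 o.-1 == 0 then r else o.

Definition max_prefix (out : nat -> nat) n := prim_rec 0 (fun k r => max_update (out k) r) n.

Definition runmax out t : option D :=
  if max_prefix out t.+1 is y.+1 then Some (rho y) else None.

Lemma max_prefix_output out n : max_prefix out n = 0 \/ exists k, out k = max_prefix out n.
Proof.
rewrite /max_prefix; elim: n => [|k IH] /=; first by left.
rewrite {1 3}/max_update; case: eqP => out_k; first by [].
by case: eqP => _; [|case: eqP => _ //]; right; exists k.
Qed.

Lemma runmax_output out t d : runmax out t = Some d -> exists k w, out k = w.+1 /\ d = rho w.
Proof.
rewrite /runmax; case: (max_prefix_output out t.+1) => [->|[k]] //.
by case: (max_prefix out t.+1) => // y out_k [<-]; exists k, y.
Qed.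

Hypothesis lt_trans : forall a b c, lt a b -> lt b c -> lt a c.

Lemma runmax_mono out t t' d d' : t <= t' ->
  runmax out t = Some d -> runmax out t' = Some d' -> d = d' \/ lt d d'.
Proof.
pose le_code r r' := r = 0 \/ r = r' \/ [/\ r <> 0, r' <> 0 & lt (rho r.-1) (rho r'.-1)].
have le_code_trans r1 r2 r3 : le_code r1 r2 -> le_code r2 r3 -> le_code r1 r3.
  case=> [->|[->|[? ? lt12]]]; [by left | by [] |].
  case=> [//|[<-|[_ ? lt23]]]; first by right; right.
  by right; right; split=> //; apply: lt_trans lt12 lt23.
have le_code_update o r : le_code r (max_update o r).
  rewrite /le_code /max_update; case: eqP => [_|/eqP o_neq0]; first by right; left.
  case: eqP => [->|/eqP r_neq0]; first by left.
  case: eqP => [_|/eqP /cmpP]; first by right; left.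
  by right; right; split=> //; apply/eqP.
have le_code_runmax k : le_code (max_prefix out t.+1) (max_prefix out (t + k).+1).
  elim: k => [|k IH]; first by rewrite addn0; right; left.
  by apply: le_code_trans IH _; rewrite addnS; apply: le_code_update.
move=> /subnKC <-; rewrite /runmax.
case: (le_code_runmax (t' - t)) => [->//|[<- ->[<-]//|[]]]; first by left.
by case: (max_prefix _ _) => // y; case: (max_prefix _ _) => // y' _ _ lt_yy' [<-] [<-]; right.
Qed.

Lemma runmax_dominates out k w :
  (forall k' w', out k' = w'.+1 ->
     [\/ rho w' = rho w, lt (rho w') (rho w) | lt (rho w) (rho w')]) ->
  out k = w.+1 -> exists2 d, runmax out k = Some d & d = rho w \/ lt (rho w) d.
Proof.
move=> out_total out_k; rewrite /runmax {1}/max_prefix /= -/(max_prefix out k).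
rewrite {1}/max_update out_k /=.
case: (max_prefix_output out k) => [->|[k' out_k']]; first by exists (rho w); last left.
move: out_k'; case: (max_prefix out k) => [|r out_k'] /=; first by exists (rho w); last left.
case: eqP => [cmp_eq0|_]; last by exists (rho w); last left.
exists (rho r) => //; case: (out_total _ _ out_k') => [->|lt_rw|]; [by left | | by right].
by move/cmpP: lt_rw; rewrite cmp_eq0.
Qed.

End RunningMax.

Lemma list_of_subset D (P : D -> Prop) (l : list D) :
  (forall d, P d -> List.In d l) -> exists l', forall d, P d <-> List.In d l'.
Proof.
elim: l P => [|a l IH] P P_l; first by exists nil => d; split => // /P_l.
have [l' Pa_l'] : exists l', forall d, (P d /\ d <> a) <-> List.In d l'.
  by apply: IH => d [/P_l [->|] //].
case: (classic (P a)) => Pa.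
- exists (a :: l') => d; split; last by case=> [<-|/Pa_l' []].
  by case: (classic (d = a)) => [->|neq_da Pd]; [left | right; apply/Pa_l'].
- exists l' => d; split; last by case/Pa_l'.
  by move=> Pd; apply/Pa_l'; split=> // eq_da; rewrite eq_da in Pd.
Qed.

Fixpoint defined_values D (s : nat -> option D) n : list D :=
  if n is n'.+1 then
    if s n' is Some d then d :: defined_values s n' else defined_values s n'
  else nil.

Lemma defined_valuesP D (s : nat -> option D) n t d :
  t < n -> s t = Some d -> List.In d (defined_values s n).
Proof.
elim: n => // n IH; rewrite ltnS leq_eqVlt => /predU1P [<- /= -> |lt_tn s_t] /=; first by left.
by case: (s n) => [d'|]; [right|]; apply: IH.
Qed.

Lemma is_max_of_eq D (lt : D -> D -> Prop) (Y Y' : bspace)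
    (f : elt Y -> nat -> option D) (f' : elt Y' -> nat -> option D) g g' y y' :
  is_max_of lt f g -> is_max_of lt f' g' ->
  (forall d, is_maxval lt f y d <-> is_maxval lt f' y' d) -> g y = g' y'.
Proof.
move=> gP g'P eq_max; have eq_g d : g y = Some d <-> g' y' = Some d.
  by rewrite gP g'P eq_max.
case E: (g y) => [d|]; first by symmetry; apply/eq_g.
by case E': (g' y') => [d'|] //; move/eq_g: E'; rewrite E.
Qed.

Section MaxOf.

Variables (D : Type) (lt : D -> D -> Prop).
Hypotheses (lt_irr : forall d, ~ lt d d) (lt_trans : forall a b c, lt a b -> lt b c -> lt a c).

Definition max_of (Y : bspace) (f : elt Y -> nat -> option D) (y : elt Y) : option D :=
  match excluded_middle_informative (exists d, is_maxval lt f y d) with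
  | left ex_max => Some (proj1_sig (constructive_indefinite_description _ ex_max))
  | right _ => None
  end.

Lemma is_maxval_unique (Y : bspace) (f : elt Y -> nat -> option D) y d d' :
  is_maxval lt f y d -> is_maxval lt f y d' -> d = d'.
Proof.
move=> [_ [t f_t] max_d] [_ [t' f_t'] max_d'].
case: (max_d' _ _ f_t) => // lt_dd'; case: (max_d _ _ f_t') => // lt_d'd.
by case: (lt_irr (lt_trans lt_dd' lt_d'd)).
Qed.

Lemma max_ofP (Y : bspace) (f : elt Y -> nat -> option D) : is_max_of lt f (max_of f).
Proof.
move=> y d; rewrite /max_of; case: excluded_middle_informative => [ex_max|no_max].
  case: constructive_indefinite_description => d0 max_d0 /=.
  by split=> [[<-] //|/(is_maxval_unique max_d0) ->].
by split=> // max_d; case: no_max; exists d.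
Qed.

Lemma is_maxval_equiv (Y Y' : bspace) (f : elt Y -> nat -> option D)
    (F : elt Y' -> nat -> option D) y y' :
  (forall s s' d d', s <= s' -> f y s = Some d -> f y s' = Some d' -> d = d' \/ lt d d') ->
  (forall t d, F y' t = Some d -> exists s, f y s = Some d) ->
  (forall s d, f y s = Some d -> exists2 d', (exists t, F y' t = Some d') & d' = d \/ lt d d') ->
  forall d, is_maxval lt f y d <-> is_maxval lt F y' d.
Proof.
move=> f_mono F_f f_F d; split.
- move=> [[l f_l] [s0 f_s0] max_d]; split.
  + by apply: (list_of_subset (l := l)) => d0 [t /F_f [s f_s]]; apply/f_l; exists s.
  + have [d' [t F_t] le_dd'] := f_F _ _ f_s0; exists t; rewrite F_t.
    have [s f_s] := F_f _ _ F_t.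
    case: (max_d _ _ f_s) => [-> //|lt_d'd]; case: le_dd' => [-> //|lt_dd'].
    by case: (lt_irr (lt_trans lt_dd' lt_d'd)).
  + by move=> t d' /F_f [s /max_d].
- move=> [[l F_l] [t0 F_t0] max_d]; have [s0 f_s0] := F_f _ _ F_t0.
  have max_f s d0 : f y s = Some d0 -> d0 = d \/ lt d0 d.
    move=> /f_F [d' [t /max_d le_d'd] le_d0d'].
    case: le_d'd => [<-|lt_d'd]; case: le_d0d' => [<-|lt_d0d']; try by [left | right].
    by right; apply: lt_trans lt_d0d' lt_d'd.
  split; [| by exists s0 | exact: max_f].
  apply: (list_of_subset (l := d :: defined_values (f y) s0)) => d0 [s f_s].
  case: (ltnP s s0) => [lt_ss0|le_s0s]; first by right; apply: defined_valuesP f_s.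
  left; case: (f_mono _ _ _ _ le_s0s f_s0 f_s) => // lt_dd0.
  by case: (max_f _ _ f_s) => [-> //|lt_d0d]; case: (lt_irr (lt_trans lt_dd0 lt_d0d)).
Qed.

End MaxOf.

(** * The universal function *)

Lemma computable_decider D (lt : D -> D -> Prop) (rho : nat -> D) :
  (exists e : recf, forall m n, (lt (rho m) (rho n) -> ev e [:: m; n] 1) /\
                                (~ lt (rho m) (rho n) -> ev e [:: m; n] 0)) ->
  exists2 cmp, computable2 cmp & decides_lt lt rho cmp.
Proof.
move=> [e He]; pose cmp m n := if excluded_middle_informative (lt (rho m) (rho n)) then 1 else 0.
exists cmp => [|m n]; last by rewrite /cmp; case: excluded_middle_informative.
exists e => -[|m [|n []]] //= _; rewrite /cmp.
by case: excluded_middle_informative => lt_mn; apply He.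
Qed.

Section Universal.

Variables (D : Type) (lt : D -> D -> Prop) (rho : nat -> D) (cmp : nat -> nat -> nat).
Hypotheses (lt_irr : forall d, ~ lt d d) (lt_trans : forall a b c, lt a b -> lt b c -> lt a c).
Hypotheses (rho_inj : forall m n, rho m = rho n -> m = n)
           (rho_surj : forall d, exists n, rho n = d).
Hypotheses (cmp_computable : computable2 cmp) (cmpP : decides_lt lt rho cmp).

Lemma pcomp2_runmax (Y : bspace) (out : nat -> nat -> nat) : computable2 out ->
  pcomp2 rho (fun (y : elt Y) t => runmax rho cmp (out (code y)) t).
Proof.
move=> out_computable.
have [e He] : exists e, forall z t n, ev e [:: z; t] n <-> max_prefix cmp (out z) t.+1 = n.+1.
  apply: partial_of_computable2.
  apply: (computable_ext (h := fun v => prim_rec 0 (fun k r =>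
            max_update cmp (out (nth 0 [:: k, r & v] 2) (nth 0 [:: k, r & v] 0))
                           (nth 0 [:: k, r & v] 1)) (nth 0 v 1).+1)) => //.
  apply: (computable_prim_rec (hb := fun w =>
            max_update cmp (out (nth 0 w 2) (nth 0 w 0)) (nth 0 w 1))); rewrite /max_update;
  solve_computable.
exists e => y t n; rewrite He /runmax.
by case: (max_prefix _ _ _) => [|m]; split=> // [[->]|[/rho_inj ->]].
Qed.

Variable X : bspace.

(* Since [code (n, x) = cpair n (code x)], [E (n, x)] is the maximum of the
   running maximum of the outputs of the program coded by [n] on the inputs
   [[:: code x; s]], dovetailed over [s] and step bounds. *)
Definition universal (p : elt (NX X)) t := runmax rho cmp (stage_output (code p)) t.

Lemma universal_MaxPR : MaxPR lt rho (max_of lt universal).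
Proof.
exists universal; split; last exact: max_ofP.
  exact/pcomp2_runmax/computable_stage_output.
by move=> p t t' d d'; apply: runmax_mono.
Qed.

Lemma universal_row_MaxPR g n : (forall x, g x = max_of lt universal (n, x)) -> MaxPR lt rho g.
Proof.
move=> eq_g; exists (fun x t => universal (n, x) t); split.
- apply: (@pcomp2_runmax X (fun a => stage_output (cpair n a))).
  by rewrite /computable2; solve_computable.
- by move=> x t t' d d'; apply: runmax_mono.
- by move=> x d; rewrite eq_g; apply: max_ofP.
Qed.

Lemma MaxPR_universal_row g :
  MaxPR lt rho g -> exists n, forall x, g x = max_of lt universal (n, x).
Proof.
move=> [f [[e He] f_mono max_g]]; exists (code_recf e) => x.
apply: (is_max_of_eq max_g (max_ofP lt_irr lt_trans universal)).
apply: (is_maxval_equiv lt_irr lt_trans (f_mono x)).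
- move=> t d; move=> /(@runmax_output D rho cmp) [k [w [out_k ->]]].
  by exists (unpair1 k); apply/He/stage_output_sound.
- move=> s d f_s; have [w def_d] := rho_surj d; rewrite -def_d in f_s *.
  have [k out_k] := stage_output_complete (proj2 (He x s w) f_s).
  have [|d' ? le_dd'] := runmax_dominates cmpP _ out_k; last by exists d'; first exists k.
  move=> k' w' /stage_output_sound /He f_s'.
  case: (leqP s (unpair1 k')) => [le|/ltnW le].
    by case: (f_mono _ _ _ _ _ le f_s f_s') => [->|]; [constructor 1 | constructor 3].
  by case: (f_mono _ _ _ _ _ le f_s' f_s) => [->|]; [constructor 1 | constructor 2].
Qed.

End Universal.

Theorem mainTheorem6 (X : bspace) (D : Type) (lt : D -> D -> Prop) (rho : nat -> D) :
  comp_poset lt rho ->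
  exists E : elt (NX X) -> option D,
    MaxPR lt rho E /\
    (forall g : elt X -> option D,
        MaxPR lt rho g <-> exists n : nat, forall x : elt X, g x = E (n, x)).
Proof.
move=> [lt_irr lt_trans rho_inj rho_surj /computable_decider [cmp cmp_computable cmpP]].
exists (max_of lt (universal rho cmp (X := X))); split.
  exact: universal_MaxPR.
move=> g; split; first exact: MaxPR_universal_row.
by move=> [n]; apply: universal_row_MaxPR.
Qed.
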